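(* Let $G=(V,E)$ be a finite undirected graph with $V=\{1,\dots,n\}$. Then $A_H$ is positive definite for every $A\in\mathbb{P}_G$ and every subgraph $H=(V,E')$ of $G$ ($E'\subseteq E$) if and only if $G$ is a union of (vertex-disjoint) trees, i.e. $G$ contains no cycle.
   Context: For a symmetric $n\times n$ real matrix $A=(a_{ij})$ and an undirected graph $K=(V,F)$ on $V=\{1,\dots,n\}$, the thresholded matrix $A_K$ is defined by $(A_K)_{ij}=a_{ij}$ if $i=j$ or $(i,j)\in F$, and $(A_K)_{ij}=0$ otherwise. $\mathbb{P}_G$ denotes the set of symmetric positive definite $n\times n$ real matrices $A$ with $a_{ij}=0$ whenever $i\neq j$ and $(i,j)\notin E$. *)

From mathcomp Require Import all_boot all_order all_algebra.
From mathcomp Require Import reals.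
Set Implicit Arguments. Unset Strict Implicit. Unset Printing Implicit Defensive.
Import Order.TTheory GRing.Theory Num.Theory.
Local Open Scope ring_scope.

Definition simple_graph (n : nat) (E : rel 'I_n) : Prop :=
  symmetric E /\ irreflexive E.

Definition posdef (R : realType) (n : nat) (A : 'M[R]_n) : Prop :=
  A^T = A /\ forall x : 'cV[R]_n, x != 0 -> 0 < (x^T *m A *m x) 0 0.

Definition threshold (R : realType) (n : nat) (A : 'M[R]_n) (F : rel 'I_n)
  : 'M[R]_n :=
  \matrix_(i, j) (if (i == j) || F i j then A i j else 0).

Definition PG (R : realType) (n : nat) (E : rel 'I_n) (A : 'M[R]_n) : Prop :=
  posdef A /\ forall i j, i != j -> ~~ E i j -> A i j = 0.

Definition has_cycle (n : nat) (E : rel 'I_n) : Prop :=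
  exists s : seq 'I_n, [/\ (3 <= size s)%N, uniq s & cycle E s].

From mathcomp Require Import all_boot all_order all_algebra.
From mathcomp Require Import reals ring lra.
Set Implicit Arguments. Unset Strict Implicit. Unset Printing Implicit Defensive.
Import Order.TTheory GRing.Theory Num.Theory.
Local Open Scope ring_scope.

(* If G is a forest and H a subgraph, an edge of G joining two vertices of one
   connected component of H already lies in H, for otherwise it would close a
   cycle.  Hence A_H is A masked to the components of H, an orthogonal direct
   sum of principal submatrices of A, and so positive definite.
   Conversely, along a cycle c_0, ..., c_l of G take
   A = eps I + L - mu g g^T, with L the Laplacian of the path c_0 ... c_l,
   g = e_(c_0) - e_(c_l) and mu = 1/l.  By Cauchy-Schwarz L dominates mu g g^T,
   so A is in P_G; but thresholding by G minus the edge {c_0, c_l} deletes the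
   entries mu at (c_0, c_l) and (c_l, c_0), which makes the quadratic form
   negative on the indicator of the cycle. *)

Section QuadraticForm.
Variables (R : comNzRingType) (n : nat).

Lemma qformE (N : 'M[R]_n) (x : 'cV[R]_n) :
  (x^T *m N *m x) 0 0 = \sum_i \sum_j x i 0 * N i j * x j 0.
Proof.
rewrite mxE exchange_big /=; apply: eq_bigr => j _.
by rewrite mxE mulr_suml; apply: eq_bigr => i _; rewrite !mxE.
Qed.

Lemma sum_delta (I : finType) (a : I) (F : I -> R) : \sum_i (i == a)%:R * F i = F a.
Proof.
rewrite (bigD1 a) //= eqxx mul1r big1 ?addr0 // => i /negbTE ->.
by rewrite mul0r.
Qed.

Lemma qform_delta (a b : 'I_n) (x : 'cV[R]_n) :
  (x^T *m delta_mx a b *m x) 0 0 = x a 0 * x b 0.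
Proof.
rewrite qformE -(sum_delta a (fun i => x i 0 * x b 0)); apply: eq_bigr => i _.
rewrite -(sum_delta b (fun j => (i == a)%:R * (x i 0 * x j 0))).
by apply: eq_bigr => j _; rewrite mxE -mulnb natrM; ring.
Qed.

Lemma qformD (M N : 'M[R]_n) (x : 'cV[R]_n) :
  (x^T *m (M + N) *m x) 0 0 = (x^T *m M *m x) 0 0 + (x^T *m N *m x) 0 0.
Proof.
rewrite !qformE -big_split; apply: eq_bigr => i _.
by rewrite -big_split; apply: eq_bigr => j _; rewrite mxE mulrDr mulrDl.
Qed.

Lemma qformB (M N : 'M[R]_n) (x : 'cV[R]_n) :
  (x^T *m (M - N) *m x) 0 0 = (x^T *m M *m x) 0 0 - (x^T *m N *m x) 0 0.
Proof.
rewrite !qformE -sumrB; apply: eq_bigr => i _.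
by rewrite -sumrB; apply: eq_bigr => j _; rewrite !mxE; ring.
Qed.

Lemma qformZ (a : R) (M : 'M[R]_n) (x : 'cV[R]_n) :
  (x^T *m (a *: M) *m x) 0 0 = a * (x^T *m M *m x) 0 0.
Proof.
rewrite !qformE mulr_sumr; apply: eq_bigr => i _.
by rewrite mulr_sumr; apply: eq_bigr => j _; rewrite mxE; ring.
Qed.

Lemma cV_neq0_exists (x : 'cV[R]_n) : x != 0 -> exists i, x i 0 != 0.
Proof.
move=> xn0; apply/existsP; apply: contraR xn0 => /existsPn x0.
by apply/eqP/matrixP => i j; rewrite ord1 mxE; exact/eqP/negbNE/x0.
Qed.

End QuadraticForm.

Section FibreMask.
Variables (R : realType) (n : nat).

Lemma posdef_qform_ge0 (A : 'M[R]_n) (y : 'cV[R]_n) :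
  posdef A -> 0 <= (y^T *m A *m y) 0 0.
Proof.
move=> [_ pdA]; have [->|yn0] := eqVneq y 0; last exact/ltW/pdA.
by rewrite mulmx0 mxE.
Qed.

Definition fibre_mask (T : finType) (f : 'I_n -> T) (A : 'M[R]_n) : 'M[R]_n :=
  \matrix_(i, j) if f i == f j then A i j else 0.

Lemma posdef_fibre_mask (T : finType) (f : 'I_n -> T) (A : 'M[R]_n) :
  posdef A -> posdef (fibre_mask f A).
Proof.
move=> [At pdA]; split.
  by apply/matrixP => i j; rewrite !mxE eq_sym -[in A j i]At mxE.
move=> x xn0.
pose y r : 'cV[R]_n := \col_i ((f i == r)%:R * x i 0).
have -> : (x^T *m fibre_mask f A *m x) 0 0 = \sum_r ((y r)^T *m A *m y r) 0 0.
  rewrite qformE; under [RHS]eq_bigr => r _ do rewrite qformE.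
  rewrite [RHS]exchange_big; apply: eq_bigr => i _.
  rewrite [RHS]exchange_big; apply: eq_bigr => j _ /=.
  have splitE r : y r i 0 * A i j * y r j 0 =
      (r == f i)%:R * ((f j == r)%:R * (x i 0 * A i j * x j 0)).
    by rewrite !mxE [r == _]eq_sym; ring.
  rewrite (eq_bigr _ (fun r _ => splitE r)) sum_delta !mxE [f j == _]eq_sym.
  by case: (f i == f j); rewrite ?(mul1r, mulr0, mul0r).
have [i0 xi0] := cV_neq0_exists xn0.
rewrite (bigD1 (f i0)) //=; apply: ltr_wpDr.
  by apply: sumr_ge0 => r _; apply: posdef_qform_ge0.
apply: pdA; apply: contra xi0 => /eqP/matrixP/(_ i0 0).
by rewrite !mxE eqxx mul1r => ->.
Qed.

End FibreMask.

Lemma acyclic_connect_edge (n : nat) (E E' : rel 'I_n) (i j : 'I_n) :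
  simple_graph E -> ~ has_cycle E -> subrel E' E ->
  E i j -> connect E' i j -> E' i j.
Proof.
move=> [symE irrE] acyclic sub Eij /connectP [p pE' lastp]; subst j.
apply/negP => nE'; apply: acyclic.
have ij : i != last i p by apply: contraTneq Eij => <-; rewrite irrE.
case/shortenP: pE' ij nE' Eij => q qE' uq _ ij nE' Eij.
exists (i :: q); split => //.
- case: q qE' uq ij nE' Eij => [|y [|z q]] //=; first by rewrite eqxx.
  by rewrite andbT => ->.
- by rewrite /= rcons_path (sub_path sub qE') /= symE.
Qed.

Lemma threshold_acyclicE (R : realType) (n : nat) (E E' : rel 'I_n)
    (A : 'M[R]_n) :
  simple_graph E -> ~ has_cycle E ->
  (forall i j, i != j -> ~~ E i j -> A i j = 0) -> symmetric E' -> subrel E' E ->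
  threshold A E' = fibre_mask (fingraph.root E') A.
Proof.
move=> simE acyclic suppA symE' sub.
apply/matrixP => i j; rewrite !mxE (root_connect (sym_connect_sym symE')).
have [->|ij] := eqVneq i j; first by rewrite connect0.
case E'ij: (E' i j); first by rewrite connect1.
case: ifP => [conn|_]; last by [].
apply/esym/suppA => //; apply: contraFN E'ij => Eij.
exact: acyclic_connect_edge simE acyclic sub Eij conn.
Qed.

Lemma sqr_sum_le (R : realFieldType) (L : nat) (a : nat -> R) :
  (\sum_(0 <= m < L) a m) ^+ 2 <= L%:R * \sum_(0 <= m < L) a m ^+ 2.
Proof.
set S := \sum_(0 <= m < L) a m; set Q := \sum_(0 <= m < L) a m ^+ 2.
(* Lagrange's identity: the sum over m, k of (a m - a k)^2 is 2 (L Q - S^2). *)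
have inner m :
    \sum_(0 <= k < L) (a m - a k) ^+ 2 = L%:R * a m ^+ 2 + Q - 2 * a m * S.
  have e k : (a m - a k) ^+ 2 = a m ^+ 2 + (a k ^+ 2 - 2 * a m * a k) by ring.
  rewrite (eq_bigr _ (fun k _ => e k)) big_split sumrB /=.
  rewrite -[\sum_(0 <= k < L) 2 * a m * a k]mulr_sumr.
  by rewrite sumr_const_nat subn0 -/Q -/S -[a m ^+ 2 *+ L]mulr_natl addrA.
have : 0 <= \sum_(0 <= m < L) \sum_(0 <= k < L) (a m - a k) ^+ 2.
  by do 2!apply: sumr_ge0 => ? _; apply: sqr_ge0.
rewrite (eq_bigr _ (fun m _ => inner m)) sumrB big_split /= -mulr_sumr -mulr_suml.
by rewrite -mulr_sumr sumr_const_nat subn0 -/Q -/S -mulr_natl; nra.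
Qed.

Section GramMatrix.
Variables (R : comNzRingType) (n : nat).

Definition gram_mx (eps mu : R) (L : nat) (d : nat -> 'I_n -> R)
    (g : 'I_n -> R) : 'M[R]_n :=
  \matrix_(i, j) (eps * (i == j)%:R + \sum_(0 <= m < L) d m i * d m j
                  - mu * (g i * g j)).

Lemma gram_mx_sym eps mu L d g :
  (gram_mx eps mu L d g)^T = gram_mx eps mu L d g.
Proof.
apply/matrixP => i j; rewrite !mxE eq_sym [g j * _]mulrC.
by under eq_bigr do rewrite mulrC.
Qed.

Lemma qform_rank1 (u : 'I_n -> R) (x : 'cV[R]_n) :
  \sum_i \sum_j x i 0 * (u i * u j) * x j 0 = (\sum_i u i * x i 0) ^+ 2.
Proof.
rewrite expr2 mulr_suml; apply: eq_bigr => i _.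
by rewrite mulr_sumr; apply: eq_bigr => j _; ring.
Qed.

Lemma qform_gram_mx eps mu L d g (x : 'cV[R]_n) :
  (x^T *m gram_mx eps mu L d g *m x) 0 0 =
  eps * \sum_i x i 0 ^+ 2 + \sum_(0 <= m < L) (\sum_i d m i * x i 0) ^+ 2
  - mu * (\sum_i g i * x i 0) ^+ 2.
Proof.
rewrite qformE.
under eq_bigr => i _ do under eq_bigr => j _ do
  rewrite mxE mulrBr mulrDr mulrBl mulrDl.
under eq_bigr => i _ do rewrite sumrB big_split /=.
rewrite sumrB big_split /= -qform_rank1 !mulr_sumr; congr (_ + _ - _).
- apply: eq_bigr => i _.
  rewrite expr2 mulrA -(sum_delta i (fun j => eps * x i 0 * x j 0)).
  by apply: eq_bigr => j _; rewrite eq_sym; ring.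
- under eq_bigr => i _ do under eq_bigr => j _ do
    rewrite mulr_sumr mulr_suml.
  under eq_bigr => i _ do rewrite exchange_big /=.
  by rewrite exchange_big /=; apply: eq_bigr => m _; rewrite qform_rank1.
- apply: eq_bigr => i _; rewrite mulr_sumr; apply: eq_bigr => j _; ring.
Qed.

Definition dipole (a b i : 'I_n) : R := (i == a)%:R - (i == b)%:R.

Lemma sum_dipole (a b : 'I_n) (x : 'cV[R]_n) :
  \sum_i dipole a b i * x i 0 = x a 0 - x b 0.
Proof. by under eq_bigr do rewrite mulrBl; rewrite sumrB !sum_delta. Qed.

Lemma dipole_mul_eq0 (E : rel 'I_n) (a b i j : 'I_n) :
  symmetric E -> E a b -> i != j -> ~~ E i j -> dipole a b i * dipole a b j = 0.
Proof.
move=> symE Eab ij nEij.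
have dipole0 k : k != a -> k != b -> dipole a b k = 0.
  by rewrite /dipole => /negbTE-> /negbTE->; rewrite subrr.
have [ia|ia] := eqVneq i a.
  rewrite (dipole0 j) ?mulr0 //; first by rewrite -ia eq_sym.
  by apply: contraNneq nEij => ->; rewrite ia.
have [ib|ib] := eqVneq i b; last by rewrite dipole0 ?mul0r.
rewrite (dipole0 j) ?mulr0 //; last by rewrite -ib eq_sym.
by apply: contraNneq nEij => ->; rewrite ib symE.
Qed.

End GramMatrix.

Arguments dipole {R n} a b i.

Section DeleteEdge.
Variables (n : nat) (E : rel 'I_n) (a b : 'I_n).

Definition delete_edge : rel 'I_n :=
  fun i j => E i j && ~~ [|| (i == a) && (j == b) | (i == b) && (j == a)].

Lemma simple_graph_delete_edge : simple_graph E -> simple_graph delete_edge.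
Proof.
case=> symE irrE; split => [i j|i]; last by rewrite /delete_edge irrE.
rewrite /delete_edge symE orbC.
by rewrite [(j == a) && _]andbC [(j == b) && _]andbC.
Qed.

Lemma threshold_delete_edge (R : realType) (M : 'M[R]_n) :
  a != b -> (forall i j, i != j -> ~~ E i j -> M i j = 0) -> M b a = M a b ->
  threshold M delete_edge = M - M a b *: (delta_mx a b + delta_mx b a).
Proof.
move=> ab suppM Mba; apply/matrixP => i j; rewrite !mxE /delete_edge.
have [/andP [/eqP-> /eqP->] | _] := boolP ((i == a) && (j == b)).
  by rewrite (negbTE ab) eq_sym (negbTE ab) /= andbF mulr1n mulr0n addr0 mulr1 subrr.
have [/andP [/eqP-> /eqP->] | _] := boolP ((i == b) && (j == a)).
  by rewrite eq_sym (negbTE ab) /= andbF mulr1n mulr0n add0r mulr1 Mba subrr.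
rewrite /= andbT mulr0n addr0 mulr0 subr0.
by case: ifP => // /norP [ij nEij]; rewrite suppM.
Qed.

End DeleteEdge.

Section CycleCounterexample.
Variables (R : realType) (n : nat) (E : rel 'I_n) (c0 : 'I_n) (s : seq 'I_n).
Hypotheses (simE : simple_graph E) (size_s : (2 <= size s)%N).
Hypotheses (uniq_s : uniq (c0 :: s)) (cycle_s : cycle E (c0 :: s)).

Local Notation l := (size s).
Let c m := nth c0 (c0 :: s) m.

Lemma cycle_nth_edge m : (m <= l)%N -> E (c m) (nth c0 (rcons s c0) m).
Proof.
move=> ml; have /(pathP c0) := cycle_s; rewrite size_rcons => /(_ m).
by rewrite ltnS => /(_ ml); rewrite -rcons_cons nth_rcons /= ltnS ml.
Qed.

Lemma cycle_step_edge m : (m < l)%N -> E (c m) (c m.+1).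
Proof. by move=> ml; have := cycle_nth_edge (ltnW ml); rewrite nth_rcons ml. Qed.

Lemma cycle_closing_edge : E (c l) (c 0).
Proof. by have := cycle_nth_edge (leqnn l); rewrite nth_rcons ltnn eqxx. Qed.

Lemma cycle_nth_eq p q : (p <= l)%N -> (q <= l)%N -> (c p == c q) = (p == q).
Proof. by move=> pl ql; apply: nth_uniq. Qed.

Let mu : R := l%:R^-1.
Let eps : R := mu / n%:R.
Let A := gram_mx eps mu l (fun m => dipole (c m) (c m.+1)) (dipole (c 0) (c l)).

Lemma cycle_mx_support i j : i != j -> ~~ E i j -> A i j = 0.
Proof.
case: simE => symE _ ij nEij; rewrite mxE (negbTE ij) mulr0 add0r.
have chord_edge : E (c 0) (c l) by rewrite symE cycle_closing_edge.
rewrite (dipole_mul_eq0 R symE chord_edge ij nEij) mulr0 subr0.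
rewrite big_nat big1 // => m /andP [_ ml].
exact: (dipole_mul_eq0 R symE (cycle_step_edge ml) ij nEij).
Qed.

Lemma qform_cycle_mx (x : 'cV[R]_n) : (x^T *m A *m x) 0 0 =
  eps * \sum_i x i 0 ^+ 2 + \sum_(0 <= m < l) (x (c m) 0 - x (c m.+1) 0) ^+ 2
  - mu * (x (c 0) 0 - x (c l) 0) ^+ 2.
Proof.
rewrite qform_gram_mx sum_dipole; congr (_ + _ - _).
by apply: eq_bigr => m _; rewrite sum_dipole.
Qed.

Lemma n_gt0 : (0 < n)%N.
Proof. exact: leq_ltn_trans (ltn_ord c0). Qed.

Lemma mu_gt0 : 0 < mu.
Proof. by rewrite invr_gt0 ltr0n; apply: leq_trans size_s. Qed.

Lemma eps_gt0 : 0 < eps.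
Proof. by rewrite divr_gt0 ?mu_gt0 ?ltr0n ?n_gt0. Qed.

Lemma cycle_mx_posdef : posdef A.
Proof.
split; first exact: gram_mx_sym.
move=> x xn0; rewrite qform_cycle_mx.
have telescope :
    \sum_(0 <= m < l) (x (c m) 0 - x (c m.+1) 0) = x (c 0) 0 - x (c l) 0.
  rewrite (telescope_sumr_eq (fun k => - x (c k) 0)) ?opprK 1?addrC // => k _.
  by rewrite opprK addrC.
have path_ge : mu * (x (c 0) 0 - x (c l) 0) ^+ 2 <=
    \sum_(0 <= m < l) (x (c m) 0 - x (c m.+1) 0) ^+ 2.
  rewrite -telescope -[X in _ <= X]mul1r -(mulVf (_ : l%:R != 0 :> R)).
    by rewrite -mulrA ler_wpM2l ?sqr_sum_le // ltW ?mu_gt0.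
  by rewrite pnatr_eq0 -lt0n (leq_trans _ size_s).
have [i0 xi0] := cV_neq0_exists xn0.
have norm_gt0 : 0 < \sum_i x i 0 ^+ 2.
  rewrite (bigD1 i0) //= ltr_pwDl ?exprn_even_gt0 //=.
  by apply: sumr_ge0 => i _; apply: sqr_ge0.
have := mulr_gt0 eps_gt0 norm_gt0; lra.
Qed.

Lemma cycle_chord_neq : c 0 != c l.
Proof. by rewrite cycle_nth_eq // eq_sym -lt0n (leq_trans _ size_s). Qed.

(* Since l >= 2, no dipole of the path is nonzero at both c 0 and c l. *)
Lemma cycle_mx_chord : A (c 0) (c l) = mu.
Proof.
rewrite mxE (negbTE cycle_chord_neq) mulr0 add0r big_nat big1; last first.
  move=> [|m] /andP [_ ml]; rewrite /dipole.
    rewrite !cycle_nth_eq ?(ltnW size_s) //.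
    by rewrite (gtn_eqF size_s) (gtn_eqF (ltnW size_s)) subrr mulr0.
  by rewrite !cycle_nth_eq ?subrr ?mul0r // ltnW.
rewrite /dipole eqxx (negbTE cycle_chord_neq) eq_sym (negbTE cycle_chord_neq) eqxx.
by rewrite mulr1n mulr0n; ring.
Qed.

Let E' := delete_edge E (c 0) (c l).

(* The indicator z of the cycle has A-energy eps * l.+1 <= mu, and deleting
   the edge {c 0, c l} subtracts 2 mu from it. *)
Lemma threshold_cycle_mx_not_posdef : ~ posdef (threshold A E').
Proof.
case=> _ pdT; pose z : 'cV[R]_n := \col_i (i \in c0 :: s)%:R.
have z_cycle m : (m <= l)%N -> z (c m) 0 = 1 by move=> ml; rewrite mxE mem_nth.
have z0 : z (c 0) 0 = 1 by rewrite z_cycle.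
have zl : z (c l) 0 = 1 by rewrite z_cycle.
have zn0 : z != 0.
  by apply: contra_neq (@oner_neq0 R) => z_eq0; rewrite -z0 z_eq0 mxE.
have Asym : A (c l) (c 0) = A (c 0) (c l).
  by rewrite -[A in LHS]gram_mx_sym mxE.
have path0 : \sum_(0 <= m < l) (z (c m) 0 - z (c m.+1) 0) ^+ 2 = 0.
  rewrite big_nat big1 // => m /andP [_ ml].
  by rewrite !z_cycle ?subrr ?expr0n // ltnW.
have norm_le : \sum_i z i 0 ^+ 2 <= n%:R.
  rewrite -[n in n%:R]card_ord -sumr_const; apply: ler_sum => i _.
  by rewrite mxE; case: (i \in _); rewrite ?expr1n ?expr0n.
have qform_z : (z^T *m A *m z) 0 0 <= mu.
  rewrite qform_cycle_mx z0 zl subrr expr0n mulr0 subr0 path0 addr0.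
  have := ler_wpM2l (ltW eps_gt0) norm_le.
  by rewrite divfK // pnatr_eq0 -lt0n n_gt0.
have := pdT z zn0.
rewrite (threshold_delete_edge cycle_chord_neq cycle_mx_support Asym) cycle_mx_chord.
rewrite qformB qformZ qformD !qform_delta z0 zl.
move: qform_z (mu_gt0); lra.
Qed.

Lemma cycle_counterexample : exists (A : 'M[R]_n) (E' : rel 'I_n),
  [/\ PG E A, simple_graph E', subrel E' E & ~ posdef (threshold A E')].
Proof.
exists A, E'; split.
- by split; [exact: cycle_mx_posdef | exact: cycle_mx_support].
- exact: simple_graph_delete_edge.
- by move=> i j /andP [].
- exact: threshold_cycle_mx_not_posdef.
Qed.

End CycleCounterexample.

Theorem corollary5 (R : realType) (n : nat) (E : rel 'I_n) :
  simple_graph E ->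
  (forall (A : 'M[R]_n) (E' : rel 'I_n),
      PG E A -> simple_graph E' -> subrel E' E ->
      posdef (threshold A E'))
  <-> ~ has_cycle E.
Proof.
move=> simE; split => [thresholdPD [[|c0 s] [size_s uniq_s cycle_s]] //|].
  have [A [E' [PGA simE' subE']]] := cycle_counterexample R simE size_s uniq_s cycle_s.
  by apply; apply: thresholdPD.
move=> acyclic A E' [posA suppA] [symE' _] subE'.
rewrite (threshold_acyclicE simE acyclic suppA symE' subE').
exact: posdef_fibre_mask.
Qed.
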